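(* Suppose $\xi\star\pi\in\perp\!\!\!\perp$. Let $\xi'\star\pi'$ be obtained from $\xi\star\pi$ by replacing some occurrences of $A$ by $(\ell_u)A=k_{u\cdot\pi_0}$ and some occurrences of the variables $q_0,\dots,q_N$ by $t_0,\dots,t_N$ respectively, where $t_0,\dots,t_N,u$ are arbitrary terms. Then, for every term $t$, $\xi'\star\pi'\in\perp\!\!\!\perp$ and $\xi'\star\pi'\cdot t\in\perp\!\!\!\perp$.
   Context: Fix an integer $N\ge 0$. The set $\Lambda$ of terms is the smallest set containing the constants $B,C,I,K,W,cc,A$ and $p,q_0,\dots,q_N$, closed under application $(\xi)\eta$ (written $\xi\eta$), and containing, for each sequence $(\xi_i)_{i\in\mathbb N}$ of closed terms (no occurrence of $p,q_0,\dots,q_N$), a constant $\bigwedge_i\xi_i$ (injectively, well-founded). Stacks: finite sequences $t_0\cdot\ldots\cdot t_{n-1}\cdot\pi_0$ of terms, $\pi_0$ the empty stack; $\Pi$ the set of stacks. If $\pi=t_0\cdot\ldots\cdot t_{n-1}\cdot\pi_0$, then $\pi\cdot t$ denotes the stack $t_0\cdot\ldots\cdot t_{n-1}\cdot t\cdot\pi_0$. $\ell_t=((C)(B)CB)t$, $k_{\pi_0}=A$, $k_{t\cdot\pi}=(\ell_t)k_\pi$; $\sigma=(BW)(C)(B)BB$, $\underline0=(K)I$, $\underline{n+1}=(\sigma)\underline n$. Execution $\succ$: least preorder on $\Lambda\times\Pi$ with $(\xi)\eta\star\pi\succ\xi\star\eta\cdot\pi$; $B\star\xi\cdot\eta\cdot\zeta\cdot\pi\succ\xi\star(\eta)\zeta\cdot\pi$;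 $C\star\xi\cdot\eta\cdot\zeta\cdot\pi\succ\xi\star\zeta\cdot\eta\cdot\pi$; $I\star\xi\cdot\pi\succ\xi\star\pi$; $K\star\xi\cdot\eta\cdot\pi\succ\xi\star\pi$; $W\star\xi\cdot\eta\cdot\pi\succ\xi\star\eta\cdot\eta\cdot\pi$; $cc\star\xi\cdot\pi\succ\xi\star k_\pi\cdot\pi$; $A\star\xi\cdot\pi\succ\xi\star\pi_0$; $\bigwedge_i\xi_i\star\underline n\cdot\pi\succ\xi_n\star\pi$. Pole $\perp\!\!\!\perp=\{\xi\star\pi:\exists\varpi,\ \xi\star\pi\succ p\star\varpi\}$. *)

From mathcomp Require Import all_boot.
Set Implicit Arguments. Unset Strict Implicit. Unset Printing Implicit Defensive.

Inductive cterm : Type :=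
| cB | cC | cI | cK | cW | ccc | cA
| cApp of cterm & cterm
| cInf of (nat -> cterm).

(* Terms of Lambda, for a fixed N: variables q_0..q_N indexed by 'I_N.+1.
   The constant /\_i xi_i is the constructor Inf applied to a sequence of
   closed terms (hence injective and well-founded). *)
Inductive term (N : nat) : Type :=
| B | C | I | K | W | cc | A | P
| Q of 'I_N.+1
| App of term N & term N
| Inf of (nat -> cterm).

Arguments B {N}. Arguments C {N}. Arguments I {N}. Arguments K {N}.
Arguments W {N}. Arguments cc {N}. Arguments A {N}. Arguments P {N}.

Fixpoint emb (N : nat) (t : cterm) : term N :=
  match t with
  | cB => B | cC => C | cI => I | cK => K | cW => W | ccc => cc | cA => A
  | cApp a b => App (emb N a) (emb N b)
  | cInf f => Inf N f
  end.

(* stacks t_0 . ... . t_{n-1} . pi_0 as finite lists; pi . t = rcons pi t *)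
Definition stack N := seq (term N).

Definition ell N (t : term N) : term N :=
  App (App C (App (App B C) B)) t.

Fixpoint kont N (pi : stack N) : term N :=
  match pi with
  | [::] => A
  | t :: pi' => App (ell t) (kont pi')
  end.

Definition sigma N : term N := App (App B W) (App C (App (App B B) B)).

Fixpoint num N (n : nat) : term N :=
  match n with
  | 0 => App K I
  | n'.+1 => App (sigma N) (num N n')
  end.

Inductive step N : term N * stack N -> term N * stack N -> Prop :=
| st_app x y pi : step (App x y, pi) (x, y :: pi)
| st_B x y z pi : step (B, x :: y :: z :: pi) (x, App y z :: pi)
| st_C x y z pi : step (C, x :: y :: z :: pi) (x, z :: y :: pi)
| st_I x pi : step (I, x :: pi) (x, pi)
| st_K x y pi : step (K, x :: y :: pi) (x, pi)
| st_W x y pi : step (W, x :: y :: pi) (x, y :: y :: pi)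
| st_cc x pi : step (cc, x :: pi) (x, kont pi :: pi)
| st_A x pi : step (A, x :: pi) (x, [::])
| st_Inf f n pi : step (Inf N f, num N n :: pi) (emb N (f n), pi).

Inductive exec N : term N * stack N -> term N * stack N -> Prop :=
| ex_refl s : exec s s
| ex_step s1 s2 s3 : step s1 s2 -> exec s2 s3 -> exec s1 s3.

Definition pole N (xi : term N) (pi : stack N) : Prop :=
  exists varpi, exec (xi, pi) (P, varpi).

Inductive repl N (ts : 'I_N.+1 -> term N) (u : term N) : term N -> term N -> Prop :=
| repl_refl x : repl ts u x x
| repl_A : repl ts u A (App (ell u) A)
| repl_Q i : repl ts u (Q i) (ts i)
| repl_App x y x' y' : repl ts u x x' -> repl ts u y y' ->
    repl ts u (App x y) (App x' y').

Inductive repl_stack N (ts : 'I_N.+1 -> term N) (u : term N) : stack N -> stack N -> Prop :=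
| rs_nil : repl_stack ts u [::] [::]
| rs_cons x x' pi pi' : repl ts u x x' -> repl_stack ts u pi pi' ->
    repl_stack ts u (x :: pi) (x' :: pi').

From mathcomp Require Import all_boot.
From Stdlib Require List.

(* The modified process runs in lockstep with the original one.  A replaced
   occurrence of A behaves like a continuation k_rho: applied to an argument, it
   drops the stack for rho instead of the empty stack, and from then on the two
   processes agree again up to replacement.  A replaced q_i is harmless, since
   q_i never reaches head position in a run ending at p and the argument of an
   instruction /\_i xi_i is a numeral, which contains neither A nor q_i.  Cells
   added at the bottom of the stack are only ever observed by cc, and then the
   captured continuation is again some k_rho. *)

Set Implicit Arguments. Unset Strict Implicit. Unset Printing Implicit Defensive.

Section Simulation.
Variable N : nat.
Variable ts : 'I_N.+1 -> term N.

(* [A] may be replaced by any continuation [k_rho], not only by [(l_u)A = k_(u.pi0)]: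
   this is what makes the relation stable under [cc]. *)
Inductive replk : term N -> term N -> Prop :=
| replk_refl x : replk x x
| replk_A rho : replk A (kont rho)
| replk_Q i : replk (Q i) (ts i)
| replk_App x y x' y' : replk x x' -> replk y y' -> replk (App x y) (App x' y').

Definition sim_conf (s s' : term N * stack N) : Prop :=
  exists pi rho, [/\ replk s.1 s'.1, List.Forall2 replk s.2 pi & s'.2 = pi ++ rho].

Lemma sim_confI x x' pi q rho :
  replk x x' -> List.Forall2 replk pi q -> sim_conf (x, pi) (x', q ++ rho).
Proof. by move=> hx hq; exists q, rho. Qed.

Lemma exec_trans (s1 s2 s3 : term N * stack N) :
  exec s1 s2 -> exec s2 s3 -> exec s1 s3.
Proof. by elim=> // a b c h _ IH /IH; apply: ex_step. Qed.

Lemma step_exec (s1 s2 : term N * stack N) : step s1 s2 -> exec s1 s2.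
Proof. by move=> h; apply: ex_step h (ex_refl _). Qed.

Lemma ell_exec t y x (pi : stack N) :
  exec (App (ell t) y, x :: pi) (y, App x t :: pi).
Proof. by do 10 (apply: ex_step; first by constructor); apply: ex_refl. Qed.

Lemma kont_exec rho x (pi : stack N) : exec (kont rho, x :: pi) (x, rho).
Proof.
elim: rho x pi => [|t rho IH] x pi /=; first exact/step_exec/st_A.
apply: exec_trans (ell_exec _ _ _ _) _; apply: exec_trans (IH _ _) _.
exact/step_exec/st_app.
Qed.

Fixpoint AQ_free (x : term N) : bool :=
  match x with
  | A | Q _ => false
  | App a b => AQ_free a && AQ_free b
  | _ => true
  end.

Lemma replk_AQ_free x y : replk x y -> AQ_free x -> y = x.
Proof. by elim=> //= a b a' b' _ IHa _ IHb /andP[/IHa-> /IHb->]. Qed.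

Lemma AQ_free_num n : AQ_free (num N n).
Proof. by elim: n. Qed.

Lemma replk_AppE x y z :
  replk (App x y) z -> exists a b, [/\ z = App a b, replk x a & replk y b].
Proof.
by move=> h; inversion h; subst; do 2 eexists; split; try constructor.
Qed.

Lemma replk_AE z : replk A z -> exists rho, z = kont rho.
Proof. by move=> h; inversion h; [exists [::] | exists rho]. Qed.

Lemma replk_kont pi q rho :
  List.Forall2 replk pi q -> replk (kont pi) (kont (q ++ rho)).
Proof.
elim=> [|x x' p p' hx _ IH] /=; first exact: replk_A.
by do 2 apply: replk_App => //; apply: replk_refl.
Qed.

Lemma Forall2_consE x pi q : List.Forall2 replk (x :: pi) q ->
  exists x' q', [/\ q = x' :: q', replk x x' & List.Forall2 replk pi q'].
Proof. by move=> h; inversion h; exists y, l'. Qed.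

Lemma step_simulation s1 s2 s1' : step s1 s2 -> sim_conf s1 s1' ->
  exists2 s2', exec s1' s2' & sim_conf s2 s2'.
Proof.
case: s1' => x' p' st [q [rho [/= hx hq ->]]].
case: st hx hq => /= {s1 s2}.
- move=> x y pi /replk_AppE[a [b [-> ha hb]]] hq.
  exists (a, b :: q ++ rho); first exact/step_exec/st_app.
  exact: sim_confI rho ha (List.Forall2_cons _ _ hb hq).
- move=> x y z pi /replk_AQ_free/(_ erefl)->.
  move=> /Forall2_consE[x1 [? [-> h1 /Forall2_consE[y1 [? [-> h2]]]]]].
  move=> /Forall2_consE[z1 [q3 [-> h3 hq]]].
  exists (x1, App y1 z1 :: q3 ++ rho); first exact/step_exec/st_B.
  exact: sim_confI rho h1 (List.Forall2_cons _ _ (replk_App h2 h3) hq).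
- move=> x y z pi /replk_AQ_free/(_ erefl)->.
  move=> /Forall2_consE[x1 [? [-> h1 /Forall2_consE[y1 [? [-> h2]]]]]].
  move=> /Forall2_consE[z1 [q3 [-> h3 hq]]].
  exists (x1, z1 :: y1 :: q3 ++ rho); first exact/step_exec/st_C.
  exact: sim_confI rho h1 (List.Forall2_cons _ _ h3 (List.Forall2_cons _ _ h2 hq)).
- move=> x pi /replk_AQ_free/(_ erefl)-> /Forall2_consE[x1 [q1 [-> h1 hq]]].
  exists (x1, q1 ++ rho); first exact/step_exec/st_I.
  exact: sim_confI rho h1 hq.
- move=> x y pi /replk_AQ_free/(_ erefl)->.
  move=> /Forall2_consE[x1 [? [-> h1 /Forall2_consE[y1 [q2 [-> h2 hq]]]]]].
  exists (x1, q2 ++ rho); first exact/step_exec/st_K.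
  exact: sim_confI rho h1 hq.
- move=> x y pi /replk_AQ_free/(_ erefl)->.
  move=> /Forall2_consE[x1 [? [-> h1 /Forall2_consE[y1 [q2 [-> h2 hq]]]]]].
  exists (x1, y1 :: y1 :: q2 ++ rho); first exact/step_exec/st_W.
  exact: sim_confI rho h1 (List.Forall2_cons _ _ h2 (List.Forall2_cons _ _ h2 hq)).
- move=> x pi /replk_AQ_free/(_ erefl)-> /Forall2_consE[x1 [q1 [-> h1 hq]]].
  exists (x1, kont (q1 ++ rho) :: q1 ++ rho); first exact/step_exec/st_cc.
  exact: sim_confI rho h1 (List.Forall2_cons _ _ (replk_kont rho hq) hq).
- move=> x pi /replk_AE[r ->] /Forall2_consE[x1 [q1 [-> h1 _]]].
  exists (x1, r); first exact: kont_exec.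
  exact: sim_confI r h1 (List.Forall2_nil _).
- move=> f n pi /replk_AQ_free/(_ erefl)-> /Forall2_consE[n1 [q1 [-> hn hq]]].
  rewrite (replk_AQ_free hn (AQ_free_num n)).
  exists (emb N (f n), q1 ++ rho); first exact/step_exec/st_Inf.
  exact: sim_confI rho (replk_refl _) hq.
Qed.

Lemma exec_simulation s1 s2 s1' : exec s1 s2 -> sim_conf s1 s1' ->
  exists2 s2', exec s1' s2' & sim_conf s2 s2'.
Proof.
move=> h; elim: h s1' => [s s' hs | a b c hab _ IH a'].
  by exists s'; first exact: ex_refl.
move=> /(step_simulation hab)[b' hab' /IH[c' hbc' hc]].
by exists c'; first exact: exec_trans hab' hbc'.
Qed.

Lemma pole_replk rho xi xi' pi pi' :
  pole xi pi -> replk xi xi' -> List.Forall2 replk pi pi' -> pole xi' (pi' ++ rho).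
Proof.
move=> [v hv] hx hpi.
have [[y v'] hexec [_ [_ [/= hP _ _]]]] := exec_simulation hv (sim_confI rho hx hpi).
by exists v'; rewrite -(replk_AQ_free hP erefl).
Qed.

Lemma repl_replk u x y : repl ts u x y -> replk x y.
Proof.
by elim=> *; [apply: replk_refl | apply: (replk_A [:: u]) | apply: replk_Q | apply: replk_App].
Qed.

Lemma repl_stack_replk u pi pi' : repl_stack ts u pi pi' -> List.Forall2 replk pi pi'.
Proof. by elim=> [|x x' p p' /repl_replk hx _ hp]; constructor. Qed.

End Simulation.

Theorem lemma3 (N : nat) (ts : 'I_N.+1 -> term N) (u : term N)
  (xi xi' : term N) (pi pi' : stack N) :
  pole xi pi -> repl ts u xi xi' -> repl_stack ts u pi pi' ->
  forall t : term N, pole xi' pi' /\ pole xi' (rcons pi' t).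
Proof.
move=> hpole /repl_replk hxi /repl_stack_replk hpi t.
by split; [rewrite -[pi']cats0 | rewrite -cats1]; exact: pole_replk hpole hxi hpi.
Qed.
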